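(* Let $\mathbf P=(P,\leq,{}',0,1)$ be a poset with complementation. Then the Dedekind-MacNeille completion $\mathrm{DM}(\mathbf P)$ is orthomodular if and only if $\mathbf P$ is a strongly $D$-continuous pseudo-orthomodular poset.
   Context: For $M\subseteq P$, $U(M)$, $L(M)$ are the sets of upper and lower bounds; $U(a,b)=U(\{a,b\})$ etc. For $B,C\subseteq P$, $B\le C$ means $b\le c$ for all $b\in B$, $c\in C$. A poset with complementation is a bounded poset with antitone involution $'$ ($x\le y\Rightarrow y'\le x'$, $x''=x$) with $L(x,x')=\{0\}$, $U(x,x')=\{1\}$; it is pseudo-orthomodular if $L(U(L(x,y),y'),y)=L(x,y)$ for all $x,y$. It is strongly $D$-continuous if for all $B,C\subseteq P$ with $B\le C$: $\bigwedge_{\mathbf P}\{g\in P\mid g\in C\text{ or } g'\in B\}=0$ if and only if every lower bound of $C$ in $P$ is below every upper bound of $B$ in $P$. The Dedekind-MacNeille completion $\mathrm{DM}(\mathbf P)$ is the complete lattice of subsets $B\subseteq P$ with $L(U(B))=B$ under inclusion, with antitone involution $X'=L(\{u'\mid u\in X\})$; a lattice with complementation is orthomodular if $x\vee y=((x\vee y)\wedge y')\vee y$ for all $x,y$. *)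

Set Implicit Arguments.

Section PosetDefs.
Variable T : Type.
Variable le : T -> T -> Prop.
Variable c : T -> T.
Variables z o : T.

Definition seteq (A B : T -> Prop) : Prop := forall x, A x <-> B x.

Definition Ub (M : T -> Prop) : T -> Prop := fun u => forall m, M m -> le m u.
Definition Lb (M : T -> Prop) : T -> Prop := fun l => forall m, M m -> le l m.

Definition pair (a b : T) : T -> Prop := fun x => x = a \/ x = b.
Definition add (M : T -> Prop) (a : T) : T -> Prop := fun x => M x \/ x = a.
Definition single (a : T) : T -> Prop := fun x => x = a.

Definition set_le (B C : T -> Prop) : Prop :=
  forall b d, B b -> C d -> le b d.

Definition is_inf (G : T -> Prop) (a : T) : Prop :=
  Lb G a /\ forall b, Lb G b -> le b a.

Definition poset_with_complementation : Prop :=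
  (forall x, le x x) /\
  (forall x y, le x y -> le y x -> x = y) /\
  (forall x y w, le x y -> le y w -> le x w) /\
  (forall x, le z x /\ le x o) /\
  (forall x y, le x y -> le (c y) (c x)) /\
  (forall x, c (c x) = x) /\
  (forall x, seteq (Lb (pair x (c x))) (single z)) /\
  (forall x, seteq (Ub (pair x (c x))) (single o)).

Definition pseudo_orthomodular : Prop :=
  forall x y, seteq (Lb (add (Ub (add (Lb (pair x y)) (c y))) y)) (Lb (pair x y)).

(* strongly D-continuous; "/\_P G = 0" read as: the infimum of G exists in P
   and equals 0 *)
Definition strongly_D_continuous : Prop :=
  forall B C : T -> Prop, set_le B C ->
    (is_inf (fun g => C g \/ B (c g)) z <->
     (forall a b, Lb C a -> Ub B b -> le a b)).

Definition DM (B : T -> Prop) : Prop := seteq (Lb (Ub B)) B.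
Definition dm_meet (X Y : T -> Prop) : T -> Prop := fun x => X x /\ Y x.
Definition dm_join (X Y : T -> Prop) : T -> Prop :=
  Lb (Ub (fun x => X x \/ Y x)).
Definition dm_compl (X : T -> Prop) : T -> Prop :=
  Lb (fun v => exists u, X u /\ v = c u).
Definition dm_bot : T -> Prop := Lb (Ub (fun _ => False)).
Definition dm_top : T -> Prop := fun _ => True.
Definition dm_le (X Y : T -> Prop) : Prop := forall x, X x -> Y x.

Definition DM_orthomodular : Prop :=
  (forall X, DM X -> DM (dm_compl X)) /\
  (forall X Y, DM X -> DM Y -> dm_le X Y -> dm_le (dm_compl Y) (dm_compl X)) /\
  (forall X, DM X -> seteq (dm_compl (dm_compl X)) X) /\
  (forall X, DM X -> seteq (dm_meet X (dm_compl X)) dm_bot) /\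
  (forall X, DM X -> seteq (dm_join X (dm_compl X)) dm_top) /\
  (forall X Y, DM X -> DM Y ->
     seteq (dm_join X Y) (dm_join (dm_meet (dm_join X Y) (dm_compl Y)) Y)).

End PosetDefs.


(* DM(P) is always an ortholattice under X' = L({x' | x in X}), so only the
   orthomodular law is at stake, and an ortholattice is orthomodular iff
   Y <= Z and Z /\ Y' = 0 force Z = Y.  In DM(P) the lower bounds of
   {g | g in C or g' in B} are exactly L(C) /\ B', and B <= C gives
   LU(B) <= L(C); hence strong D-continuity of P says precisely that this
   criterion holds for the pair LU(B) <= L(C), and every pair Y <= Z of DM(P)
   arises this way, with B = Y and C = U(Z).  Pseudo-orthomodularity is the
   criterion for Y = L(x,y) <= Z = L(U(L(x,y),y'),y), so it comes for free. *)

Set Implicit Arguments.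

Section DedekindMacNeille.
Variables (T : Type) (le : T -> T -> Prop) (c : T -> T) (z o : T).

Local Notation L := (Lb le).
Local Notation U := (Ub le).
Local Notation join := (dm_join le).
Local Notation compl := (dm_compl le c).
Local Notation bot := (dm_bot le).

Lemma DM_Lb (S : T -> Prop) : DM le (L S).
Proof.
  intro x; split.
  - intros Hx m Hm. apply Hx. intros p Hp. apply Hp, Hm.
  - intros Hx u Hu. apply Hu, Hx.
Qed.

Lemma dm_le_compl X Y : dm_le X Y -> dm_le (compl Y) (compl X).
Proof.
  intros HXY x Hx v [u [Hu ->]]. apply Hx. exists u. split; [apply HXY, Hu | reflexivity].
Qed.

Lemma dm_le_joinl X Y : dm_le X (join X Y).
Proof. intros x Hx u Hu. apply Hu. left. exact Hx. Qed.

Lemma dm_le_joinr X Y : dm_le Y (join X Y).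
Proof. intros x Hx u Hu. apply Hu. right. exact Hx. Qed.

Lemma dm_join_least X Y Z :
  DM le Z -> dm_le X Z -> dm_le Y Z -> dm_le (join X Y) Z.
Proof.
  intros HZ HXZ HYZ x Hx. apply HZ. intros u Hu. apply Hx.
  intros m [Hm | Hm]; apply Hu; [apply HXZ, Hm | apply HYZ, Hm].
Qed.

Definition DM_orthomodular_law : Prop :=
  forall X Y, DM le X -> DM le Y ->
    seteq (join X Y) (join (dm_meet (join X Y) (compl Y)) Y).

(* [dm_meet Z (compl Y)] is the difference Z - Y. *)
Definition DM_zero_diff_le : Prop :=
  forall Y Z, DM le Y -> DM le Z -> dm_le Y Z ->
    dm_le (dm_meet Z (compl Y)) bot -> dm_le Z Y.

Hypothesis HP : poset_with_complementation le c z o.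

Lemma le_refl x : le x x.
Proof. destruct HP as (H & _). apply H. Qed.

Lemma le_trans x y w : le x y -> le y w -> le x w.
Proof. destruct HP as (_ & _ & H & _). apply H. Qed.

Lemma le0x x : le z x.
Proof. destruct HP as (_ & _ & _ & H & _). apply H. Qed.

Lemma lex1 x : le x o.
Proof. destruct HP as (_ & _ & _ & H & _). apply H. Qed.

Lemma compl_antitone x y : le x y -> le (c y) (c x).
Proof. destruct HP as (_ & _ & _ & _ & H & _). apply H. Qed.

Lemma complK x : c (c x) = x.
Proof. destruct HP as (_ & _ & _ & _ & _ & H & _). apply H. Qed.

Lemma eq0_of_le_compl x : le x (c x) -> x = z.
Proof.
  destruct HP as (_ & _ & _ & _ & _ & _ & H & _). intro Hx.
  apply (H x x). intros m [-> | ->]; [apply le_refl | exact Hx].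
Qed.

Lemma eq1_of_compl_le x : le (c x) x -> x = o.
Proof.
  destruct HP as (_ & _ & _ & _ & _ & _ & _ & H). intro Hx.
  apply (H x x). intros m [-> | ->]; [apply le_refl | exact Hx].
Qed.

Lemma dm_bot_le0 x : bot x -> le x z.
Proof. intro Hx. apply Hx. intros m []. Qed.

Lemma le0_dm_bot x : le x z -> bot x.
Proof. intros Hx m _. apply le_trans with z; [exact Hx | apply le0x]. Qed.

Lemma dm_bot_of_le_compl x : le x (c x) -> bot x.
Proof. intro Hx. apply le0_dm_bot. rewrite (eq0_of_le_compl Hx). apply le_refl. Qed.

Lemma DM_zero X : DM le X -> X z.
Proof. intro HX. apply HX. intros u _. apply le0x. Qed.

Lemma DM_down X x y : DM le X -> le x y -> X y -> X x.
Proof.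
  intros HX Hxy Hy. apply HX. intros u Hu. apply le_trans with y; [exact Hxy | apply Hu, Hy].
Qed.

Lemma dm_complK X : DM le X -> seteq (compl (compl X)) X.
Proof.
  intros HX x; split.
  - intro Hx. apply HX. intros w Hw.
    rewrite <- (complK w). apply Hx. exists (c w). split; [| reflexivity].
    intros m [u [Hu ->]]. apply compl_antitone, Hw, Hu.
  - intros Hx m [u [Hu ->]]. rewrite <- (complK x). apply compl_antitone.
    apply Hu. exists x. split; [exact Hx | reflexivity].
Qed.

Lemma dm_meet_compl X : DM le X -> seteq (dm_meet X (compl X)) bot.
Proof.
  intros HX x; split.
  - intros [Hx Hxc]. apply dm_bot_of_le_compl, Hxc.
    exists x. split; [exact Hx | reflexivity].
  - intro Hx. apply dm_bot_le0 in Hx. split.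
    + exact (DM_down HX Hx (DM_zero HX)).
    + intros m _. apply le_trans with z; [exact Hx | apply le0x].
Qed.

Lemma dm_join_compl X : seteq (join X (compl X)) (@dm_top T).
Proof.
  intro x; split; [intros _; exact I |]. intros _ m Hm.
  assert (m = o) as ->; [| apply lex1].
  apply eq1_of_compl_le, Hm. right. intros q [u [Hu ->]].
  apply compl_antitone, Hm. left. exact Hu.
Qed.

Lemma DM_orthomodularE : DM_orthomodular le c <-> DM_orthomodular_law.
Proof.
  split; [intros (_ & _ & _ & _ & _ & law); exact law |].
  intro law. split; [| split; [| split; [| split; [| split]]]].
  - intros X _. apply DM_Lb.
  - intros X Y _ _. apply dm_le_compl.
  - exact dm_complK.
  - exact dm_meet_compl.
  - intros X _. apply dm_join_compl.
  - exact law.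
Qed.

Lemma zero_diff_le_of_orthomodular_law : DM_orthomodular_law -> DM_zero_diff_le.
Proof.
  intros law Y Z HY HZ HYZ Hdiff x Hx.
  assert (HZY : dm_le (join Z Y) Z) by exact (dm_join_least HZ (fun _ h => h) HYZ).
  assert (Hdiff_Y : dm_le (dm_meet (join Z Y) (compl Y)) Y).
  { intros w [Hw HwY]. apply (DM_down (y := z) HY); [| apply DM_zero, HY].
    apply dm_bot_le0, Hdiff. split; [apply HZY, Hw | exact HwY]. }
  apply (dm_join_least HY Hdiff_Y (fun _ h => h)).
  apply (law Z Y HZ HY), dm_le_joinl, Hx.
Qed.

Lemma orthomodular_law_of_zero_diff_le : DM_zero_diff_le -> DM_orthomodular_law.
Proof.
  intros crit X Y _ HY.
  set (J := join X Y). set (W := dm_meet J (compl Y)).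
  assert (HJ : DM le J) by apply DM_Lb.
  assert (HWY_J : dm_le (join W Y) J).
  { apply dm_join_least; [exact HJ | intros w Hw; exact (proj1 Hw) | apply dm_le_joinr]. }
  intro x; split; [| apply HWY_J].
  apply (crit (join W Y) J (DM_Lb _) HJ HWY_J).
  intros v [HvJ HvWY].
  assert (HvW : W v).
  { split; [exact HvJ |]. apply (dm_le_compl (dm_le_joinr W Y)), HvWY. }
  apply dm_bot_of_le_compl, (dm_le_compl (dm_le_joinl W Y) HvWY).
  exists v. split; [exact HvW | reflexivity].
Qed.

Lemma Lb_or_compl B C :
  seteq (L (fun g => C g \/ B (c g))) (dm_meet (L C) (compl B)).
Proof.
  intro l; split.
  - intro Hl. split.
    + intros m Hm. apply Hl. left. exact Hm.
    + intros v [u [Hu ->]]. apply Hl. right. rewrite complK. exact Hu.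
  - intros [HlC HlB] g [Hg | Hg].
    + apply HlC, Hg.
    + rewrite <- (complK g). apply HlB. exists (c g). split; [exact Hg | reflexivity].
Qed.

Lemma is_inf_zeroP G : is_inf le G z <-> dm_le (L G) bot.
Proof.
  split.
  - intros [_ Hinf] l Hl. apply le0_dm_bot, Hinf, Hl.
  - intro H. split; [intros m _; apply le0x |].
    intros l Hl. apply dm_bot_le0, H, Hl.
Qed.

Lemma zero_diff_le_of_SDC : strongly_D_continuous le c z -> DM_zero_diff_le.
Proof.
  intros SDC Y Z HY HZ HYZ Hdiff x Hx.
  assert (HBC : set_le le Y (U Z)) by (intros b d Hb Hd; apply Hd, HYZ, Hb).
  assert (Hinf : is_inf le (fun g => U Z g \/ Y (c g)) z).
  { apply is_inf_zeroP. intros l Hl.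
    destruct (proj1 (Lb_or_compl Y (U Z) l) Hl) as [HlZ HlY].
    apply Hdiff. split; [apply HZ, HlZ | exact HlY]. }
  apply HY. intros u Hu.
  exact (proj1 (SDC Y (U Z) HBC) Hinf x u (proj2 (HZ x) Hx) Hu).
Qed.

Lemma SDC_of_zero_diff_le : DM_zero_diff_le -> strongly_D_continuous le c z.
Proof.
  intros crit B C HBC. split.
  - intros Hinf a b Ha Hb.
    assert (HBC' : dm_le (L (U B)) (L C)).
    { intros y Hy d Hd. apply Hy. intros p Hp. apply HBC; assumption. }
    assert (Hdiff : dm_le (dm_meet (L C) (compl (L (U B)))) bot).
    { assert (HB_LUB : dm_le B (L (U B))) by (intros p Hp u Hu; apply Hu, Hp).
      intros v [HvC HvB]. apply (proj1 (is_inf_zeroP _) Hinf), (proj2 (Lb_or_compl B C v)).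
      split; [exact HvC | exact (dm_le_compl HB_LUB HvB)]. }
    exact (crit _ _ (DM_Lb _) (DM_Lb _) HBC' Hdiff a Ha b Hb).
  - intro Hle. apply is_inf_zeroP. intros l Hl.
    destruct (proj1 (Lb_or_compl B C l) Hl) as [HlC HlB].
    assert (Hup : U B (c l)).
    { intros b Hb. rewrite <- (complK b). apply compl_antitone, HlB.
      exists b. split; [exact Hb | reflexivity]. }
    exact (dm_bot_of_le_compl (Hle l (c l) HlC Hup)).
Qed.

Lemma pseudo_orthomodular_of_zero_diff_le :
  DM_zero_diff_le -> pseudo_orthomodular le c.
Proof.
  intros crit x y.
  set (Y := L (pair x y)).
  set (Z := L (add (U (add Y (c y))) y)).
  assert (HYZ : dm_le Y Z).
  { intros l Hl m [Hm | ->]; [apply Hm; left; exact Hl | apply Hl; right; reflexivity]. }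
  intro l; split; [| apply HYZ].
  apply (crit Y Z (DM_Lb _) (DM_Lb _) HYZ).
  intros w [HwZ HwY].
  assert (Hup : U (add Y (c y)) (c w)).
  { intros m [Hm | ->].
    - rewrite <- (complK m). apply compl_antitone, HwY.
      exists m. split; [exact Hm | reflexivity].
    - apply compl_antitone, HwZ. right. reflexivity. }
  apply dm_bot_of_le_compl, HwZ. left. exact Hup.
Qed.

End DedekindMacNeille.

Theorem theorem9 (T : Type) (le : T -> T -> Prop) (c : T -> T) (z o : T)
  (HP : poset_with_complementation le c z o) :
  DM_orthomodular le c <->
  (strongly_D_continuous le c z /\ pseudo_orthomodular le c).
Proof.
  split.
  - intros Hom%(DM_orthomodularE HP).
    pose proof (zero_diff_le_of_orthomodular_law HP Hom) as crit.
    split.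
    + exact (SDC_of_zero_diff_le HP crit).
    + exact (pseudo_orthomodular_of_zero_diff_le HP crit).
  - intros [SDC _]. apply (DM_orthomodularE HP).
    exact (orthomodular_law_of_zero_diff_le HP (zero_diff_le_of_SDC HP SDC)).
Qed.
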